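(* Let $\mathcal B$ be a finite set of finite Cornish algebras of type $F$ and let $\mathcal Y=\{D(\mathbf A)\mid\mathbf A\in\mathcal B\}$. Then the following are equivalent: (1) the algebras in $\mathcal B$ are quasi-primal and share a common ternary discriminator term; (2) for all $\mathbb X_1,\mathbb X_2\in\mathcal Y$, for each Cornish space $\mathbb Y$ of type $F$ and every pair $\phi_1\colon\mathbb X_1\to\mathbb Y$, $\phi_2\colon\mathbb X_2\to\mathbb Y$ of jointly surjective morphisms, either $\mathbb Y=\mathbb Y_1\,\dot\cup\,\mathbb Y_2$ where $\mathbb Y_i:=\phi_i(\mathbb X_i)$ for $i=1,2$, or both $\phi_1$ and $\phi_2$ are surjective; (3) each $\mathbb X\in\mathcal Y$ has no non-empty proper substructures and, for all $\mathbb X_1,\mathbb X_2\in\mathcal Y$, for each Cornish space $\mathbb Y$ of type $F$ and every pair $\phi_1\colon\mathbb X_1\to\mathbb Y$, $\phi_2\colon\mathbb X_2\to\mathbb Y$ of jointly surjective morphisms, if $\phi_1(a)$ and $\phi_2(b)$ are comparable for some $a\in X_1$ and $b\in X_2$, then there exist $c\in X_1$ and $d\in X_2$ with $\phi_1(c)=\phi_2(d)$.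
   Context: $F=F^+\,\dot\cup\,F^-$ is a set of unary operation symbols. A Cornish algebra of type $F$: a bounded distributive lattice $\langle A;\vee,\wedge,0,1\rangle$ with unary operations $f^{\mathbf A}$ ($f\in F$), an endomorphism for $f\in F^+$ and a dual endomorphism for $f\in F^-$. A Cornish space of type $F$: a Priestley space $\langle X;\le,\mathscr T\rangle$ with unary operations $f^{\mathbb X}$ ($f\in F$) that are continuous and order-preserving for $f\in F^+$, continuous and order-reversing for $f\in F^-$; morphisms are continuous order-preserving maps commuting with every $f$. A substructure of a Cornish space is a topologically closed subset closed under all $f^{\mathbb X}$. For a Cornish algebra $\mathbf A$, $D(\mathbf A)$ is the set of bounded-lattice homomorphisms $x\colon\langle A;\vee,\wedge,0,1\rangle\to\mathbf 2$, ordered pointwise, with topology inherited from $\{0,1\}^A$, and $f^{D(\mathbf A)}(x)=x\circ f^{\mathbf A}$ if $f\in F^+$, $f^{D(\mathbf A)}(x)=c\circ x\circ f^{\mathbf A}$ if $f\in F^-$, where $c$ is Boolean complementation on $\{0,1\}$. For a morphism $\phi\colon\mathbb X\to\mathbb Y$, $\phi(\mathbb X)$ is the substructure of $\mathbb Y$ with underlying set $\phi(X)$. Morphisms $\phi_1,\phi_2$ into $\mathbb Y$ are jointly surjective if $\phi_1(X_1)\cup\phi_2(X_2)=Y$. $\mathbb Y=\mathbb Y_1\,\dot\cup\,\mathbb Y_2$ means $Y_1\cap Y_2=\emptyset$, $Y=Y_1\cup Y_2$ and no element of $Y_1$ is comparable with an element of $Y_2$. Quasi-primal: finite algebra having the ternary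 discriminator ($\tau(x,y,z)=x$ if $x\ne y$, $=z$ if $x=y$) as a term function; sharing a common ternary discriminator term: one ternary term induces $\tau$ on each algebra. *)

From HB Require Import structures.
From mathcomp Require Import all_boot all_order all_algebra.
From mathcomp Require Import all_classical topology function_spaces subtype_topology.

Set Implicit Arguments.
Unset Strict Implicit.
Unset Printing Implicit Defensive.

Local Open Scope classical_set_scope.

(** * Type F = F^+ \dot\cup F^- : a type of unary operation symbols together
    with a sign; [Fpos f = true] iff f \in F^+, [Fpos f = false] iff f \in F^-. *)

Definition lat_endo (d : Order.disp_t) (L : tbDistrLatticeType d) (g : L -> L) :=
  [/\ forall a b, g (Order.join a b) = Order.join (g a) (g b),
      forall a b, g (Order.meet a b) = Order.meet (g a) (g b),
      g Order.bottom = Order.bottom & g Order.top = Order.top].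

Definition lat_dual_endo (d : Order.disp_t) (L : tbDistrLatticeType d) (g : L -> L) :=
  [/\ forall a b, g (Order.join a b) = Order.meet (g a) (g b),
      forall a b, g (Order.meet a b) = Order.join (g a) (g b),
      g Order.bottom = Order.top & g Order.top = Order.bottom].

Record CornishAlg (F : Type) (Fpos : F -> bool) := {
  ca_disp : Order.disp_t;
  ca_car : finTBDistrLatticeType ca_disp;
  ca_op : F -> ca_car -> ca_car;
  ca_op_hom : forall f, if Fpos f then lat_endo (ca_op f) else lat_dual_endo (ca_op f)
}.
Arguments ca_op {F Fpos} c f _ : rename.

Inductive term (F V : Type) : Type :=
  | tvar of V
  | tjoin of term F V & term F V
  | tmeet of term F V & term F V
  | tbot
  | ttop
  | tapp of F & term F V.

Fixpoint teval (F : Type) (Fpos : F -> bool) (A : CornishAlg Fpos) (V : Type)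
    (e : V -> ca_car A) (t : term F V) : ca_car A :=
  match t with
  | tvar v => e v
  | tjoin t1 t2 => Order.join (teval e t1) (teval e t2)
  | tmeet t1 t2 => Order.meet (teval e t1) (teval e t2)
  | tbot => Order.bottom
  | ttop => Order.top
  | tapp f t1 => ca_op A f (teval e t1)
  end.

Definition env3 (T : Type) (x y z : T) : 'I_3 -> T :=
  fun i => nth x [:: x; y; z] i.

Definition is_discriminator_term (F : Type) (Fpos : F -> bool) (A : CornishAlg Fpos)
    (t : term F 'I_3) : Prop :=
  forall x y z : ca_car A, teval (env3 x y z) t = (if x == y then z else x).

Definition quasi_primal (F : Type) (Fpos : F -> bool) (A : CornishAlg Fpos) : Prop :=
  exists t : term F 'I_3, is_discriminator_term A t.

Definition up_set (T : Type) (le : T -> T -> Prop) (U : set T) :=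
  forall x y, U x -> le x y -> U y.

Record CornishSpace (F : Type) (Fpos : F -> bool) := {
  cs_car : topologicalType;
  cs_le : cs_car -> cs_car -> Prop;
  cs_le_refl : forall x, cs_le x x;
  cs_le_anti : forall x y, cs_le x y -> cs_le y x -> x = y;
  cs_le_trans : forall x y z, cs_le x y -> cs_le y z -> cs_le x z;
  cs_compact : compact [set: cs_car];
  cs_priestley : forall x y, ~ cs_le x y ->
      exists U : set cs_car, [/\ clopen U, up_set cs_le U, U x & ~ U y];
  cs_op : F -> cs_car -> cs_car;
  cs_op_cont : forall f, continuous (cs_op f);
  cs_op_mono : forall f x y, cs_le x y ->
      if Fpos f then cs_le (cs_op f x) (cs_op f y) else cs_le (cs_op f y) (cs_op f x)
}.
Arguments cs_le {F Fpos} c _ _ : rename.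
Arguments cs_op {F Fpos} c f _ : rename.

Definition lat_hom2 (d : Order.disp_t) (L : tbDistrLatticeType d) (x : L -> bool) :=
  [/\ forall a b, x (Order.join a b) = x a || x b,
      forall a b, x (Order.meet a b) = x a && x b,
      x Order.bottom = false & x Order.top = true].

(** the set of bounded-lattice homomorphisms A -> 2 inside {0,1}^A with the
    product topology; D(A) is the corresponding subspace *)
Definition hom_set (F : Type) (Fpos : F -> bool) (A : CornishAlg Fpos) :
    set {ptws ca_car A -> bool} := [set x | lat_hom2 x].
Arguments hom_set {F Fpos} A.

Definition Dcar (F : Type) (Fpos : F -> bool) (A : CornishAlg Fpos) : topologicalType :=
  set_type (hom_set A).

Definition Dle (F : Type) (Fpos : F -> bool) (A : CornishAlg Fpos) (x y : Dcar A) : Prop :=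
  forall a : ca_car A, (val x a : bool) ==> val y a.

Definition Dop_fun (F : Type) (Fpos : F -> bool) (A : CornishAlg Fpos) (f : F)
    (x : ca_car A -> bool) : ca_car A -> bool :=
  if Fpos f then (fun a => x (ca_op A f a)) else (fun a => ~~ x (ca_op A f a)).

Lemma Dop_fun_hom (F : Type) (Fpos : F -> bool) (A : CornishAlg Fpos) (f : F)
    (x : Dcar A) : Dop_fun f (val x) \in hom_set A.
Proof.
apply: mem_set; have := set_valP x; rewrite /hom_set /= => -[xj xm xb xt].
rewrite /Dop_fun; have := ca_op_hom A f.
case: (Fpos f) => -[hj hm hb ht]; split=> [a b|a b||].
- by rewrite hj xj.
- by rewrite hm xm.
- by rewrite hb xb.
- by rewrite ht xt.
- by rewrite hj xm negb_and.
- by rewrite hm xj negb_or.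
- by rewrite hb xt.
- by rewrite ht xb.
Qed.

Definition Dop (F : Type) (Fpos : F -> bool) (A : CornishAlg Fpos) (f : F) (x : Dcar A) :
    Dcar A := SigSub (Dop_fun_hom f x).

Definition is_morphism (F : Type) (Fpos : F -> bool) (A : CornishAlg Fpos)
    (Y : CornishSpace Fpos) (phi : Dcar A -> cs_car Y) : Prop :=
  [/\ continuous phi,
      (forall x y, Dle x y -> cs_le Y (phi x) (phi y)) &
      (forall f x, phi (Dop f x) = cs_op Y f (phi x))].

Definition D_substructure (F : Type) (Fpos : F -> bool) (A : CornishAlg Fpos)
    (S : set (Dcar A)) : Prop :=
  closed S /\ (forall f x, S x -> S (Dop f x)).

Definition surjective_map (T U : Type) (phi : T -> U) := forall y, exists x, phi x = y.

Definition jointly_surjective (T1 T2 U : Type) (phi1 : T1 -> U) (phi2 : T2 -> U) :=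
  forall y, (exists x, phi1 x = y) \/ (exists x, phi2 x = y).

Definition comparable_in (T : Type) (le : T -> T -> Prop) (a b : T) := le a b \/ le b a.

Definition ordered_disjoint_union (F : Type) (Fpos : F -> bool) (Y : CornishSpace Fpos)
    (Y1 Y2 : set (cs_car Y)) : Prop :=
  [/\ Y1 `&` Y2 = set0, Y1 `|` Y2 = [set: cs_car Y] &
      forall a b, Y1 a -> Y2 b -> ~ comparable_in (cs_le Y) a b].

(* A term evaluated on the up-sets of a Cornish space Y (the dual algebra of
   Y) and pulled back along a morphism D(A) -> Y is the term function of A,
   because every up-set of the finite space D(A) is the support of an element
   of A.  So a common discriminator t separates: if y = phi2 q is not in the
   image of phi1, the up-sets of y and of the part of the image of phi1 above
   y agree on that image and differ at y, and t applied to them gives an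
   up-set that distinguishes the two images and forbids any order relation
   between them; the same argument inside D(A) shows that D(A) has no proper
   substructure.
   Conversely, given x, z in A and x' <> y', z' in A', send D(A) and D(A') to
   their profiles t |-> h (t (x, x, z)) and t |-> h (t (x', y', z')).  The
   image of D(A) cannot cover that of D(A'), as this would force x' = y', so
   under (2) or (3) the two images are incomparable, and a join of meets of
   separating terms gives t with t (x, x, z) = z and t (x', y', z') = x'.
   The lattice median is a majority term, which glues these pairwise terms
   into a single discriminator for all of B (as in the Baker-Pixley theorem). *)

From HB Require Import structures.
From mathcomp Require Import all_boot all_order all_algebra.
From mathcomp Require Import all_classical topology function_spaces subtype_topology.

Set Implicit Arguments.
Unset Strict Implicit.
Unset Printing Implicit Defensive.

Import Order.TTheory.
Local Open Scope classical_set_scope.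

Definition upward (T : Type) (le : T -> T -> Prop) (U : T -> bool) :=
  forall x y, le x y -> U x -> U y.

Lemma upward_cst (T : Type) (le : T -> T -> Prop) (b : bool) : upward le (fun=> b).
Proof. by []. Qed.

Section UpSets.
Variables (T : Type) (le : T -> T -> Prop).
Hypotheses (le_refl : forall x, le x x) (le_trans : forall x y z, le x y -> le y z -> le x z).

Definition up_from (y : T) (v : T) : bool := `[< le y v >].

Definition up_through (R : set T) (y : T) (v : T) : bool :=
  `[< exists w, [/\ R w, le y w & le w v] >].

Lemma up_from_upward y : upward le (up_from y).
Proof. by move=> u v uv /asboolP yu; apply/asboolP; apply: le_trans uv. Qed.

Lemma up_through_upward R y : upward le (up_through R y).
Proof.
move=> u v uv /asboolP[w [Rw yw wu]]; apply/asboolP; exists w; split => //.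
exact: le_trans uv.
Qed.

Lemma up_through_in R y v : R v -> up_through R y v = up_from y v.
Proof.
move=> Rv; apply/asboolP/asboolP => [[w [_ yw wv]]|yv]; first exact: le_trans wv.
by exists v.
Qed.

Lemma up_from_refl y : up_from y y.
Proof. exact/asboolP. Qed.

Hypothesis le_anti : forall x y, le x y -> le y x -> x = y.

Lemma up_through_out (R : set T) y : ~ R y -> up_through R y y = false.
Proof. by move=> nRy; apply/asboolP => -[w [Rw yw wy]]; apply: nRy; rewrite (le_anti yw wy). Qed.
End UpSets.

Section DualSpace.
Variables (F : Type) (Fpos : F -> bool) (A : CornishAlg Fpos).
Local Notation L := (ca_car A).
Local Open Scope order_scope.

Lemma Dcar_hom (h : Dcar A) : lat_hom2 (val h : L -> bool).
Proof. by have := set_valP h. Qed.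

Lemma val_Dop f (h : Dcar A) a :
  val h (ca_op A f a) = (if Fpos f then val (Dop f h) a else ~~ val (Dop f h) a).
Proof. by rewrite /Dop /= /Dop_fun; case: (Fpos f); rewrite ?negbK. Qed.

Lemma Dcar_inj (h h' : Dcar A) : val h =1 val h' -> h = h'.
Proof. by move=> e; apply: val_inj; apply: funext. Qed.

Lemma Dle_refl (h : Dcar A) : Dle h h.
Proof. by move=> a; apply/implyP. Qed.

Lemma Dle_trans (h1 h2 h3 : Dcar A) : Dle h1 h2 -> Dle h2 h3 -> Dle h1 h3.
Proof. by move=> h12 h23 a; apply/implyP => /(implyP (h12 a)) /(implyP (h23 a)). Qed.

Lemma Dle_anti (h h' : Dcar A) : Dle h h' -> Dle h' h -> h = h'.
Proof.
move=> hh' h'h; apply: Dcar_inj => a.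
by have := hh' a; have := h'h a; case: (val h a); case: (val h' a).
Qed.

Lemma Dhom_bigjoin (h : Dcar A) (I : Type) (r : seq I) (P : pred I) (G : I -> L) :
  val h (\join_(i <- r | P i) G i) = \big[orb/false]_(i <- r | P i) val h (G i).
Proof. by have [hj _ hb _] := Dcar_hom h; apply: big_morph. Qed.

Lemma Dhom_bigmeet (h : Dcar A) (I : Type) (r : seq I) (P : pred I) (G : I -> L) :
  val h (\meet_(i <- r | P i) G i) = \big[andb/true]_(i <- r | P i) val h (G i).
Proof. by have [_ hm _ ht] := Dcar_hom h; apply: big_morph. Qed.

Definition upset_rep (V : Dcar A -> bool) : L :=
  \join_(a | `[< forall h : Dcar A, val h a -> V h >]) a.

Lemma upset_repE (V : Dcar A -> bool) :
  upward (@Dle _ _ A) V -> forall h, val h (upset_rep V) = V h.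
Proof.
move=> Vup h; rewrite Dhom_bigjoin big_orE; apply/existsP/idP.
  by case=> a /andP[/asboolP aV ha]; apply: aV.
move=> Vh; exists (\meet_(b | val h b) b); apply/andP; split; last first.
  by rewrite Dhom_bigmeet big_andE; apply/forallP => b; apply/implyP.
apply/asboolP => h'; rewrite Dhom_bigmeet big_andE => /forallP hh'.
by apply: Vup Vh => b; apply/implyP => hb; have := hh' b; rewrite hb.
Qed.

Lemma Dhom_sep_le (a b : L) : ~~ (a <= b) -> exists h : Dcar A, val h a && ~~ val h b.
Proof.
pose P c := (c <= a) && ~~ (c <= b); move=> nab; have Pa : P a by rewrite /P lexx.
(* a minimal element j of P is join-prime, so (j <= _) is a point of D(A) *)
case: (arg_minnP (fun j => #|[pred d | d < j]|) Pa) => j /andP[ja jb] jmin.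
have below_b d : d < j -> d <= b.
  move=> dj; apply: contraT => db.
  have Pd : P d by rewrite /P db (le_trans (ltW dj) ja).
  have := jmin d Pd; rewrite leqNgt => /negP[].
  apply: proper_card; apply/properP; split; last by exists d; rewrite !inE ?ltxx.
  by apply/fintype.subsetP => e; rewrite !inE => /lt_trans; apply; exact: dj.
have hom : lat_hom2 ((fun c => j <= c) : {ptws L -> bool}).
  split=> [c d|c d||] /=; last 2 first.
  - by apply: negbTE; apply: contra jb => /le_trans; apply; exact: le0x.
  - exact: lex1.
  - apply/idP/orP => [jcd|]; last by case=> jx; apply: le_trans jx _; rewrite ?leUl ?leUr.
    apply: contrapT => /not_orP[/negP jc /negP jd]; move/negP: jb; apply.
    have lt_meet e : ~~ (j <= e) -> j `&` e < j.
      by move=> je; rewrite lt_neqAle leIl andbT; apply: contraNneq je => <-; rewrite leIr.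
    have -> : j = (j `&` c) `|` (j `&` d) by rewrite -meetUr; apply/esym/meet_l.
    by rewrite leUx !below_b ?lt_meet.
  - by rewrite lexI.
by exists (SigSub (mem_set hom)); rewrite /= ja.
Qed.

Lemma eq_from_Dhom (a b : L) : (forall h : Dcar A, val h a = val h b) -> a = b.
Proof.
move=> ab; apply/le_anti/andP; split; apply: contraT => /Dhom_sep_le[h];
  by rewrite ab ?andbN // -ab andbN.
Qed.

Lemma Dcar_finite : finite_set [set: Dcar A].
Proof.
apply: (@finite_preimage _ _ setT (fun h : Dcar A => finfun (val h))) => [h h' _ _ e|].
  by apply: Dcar_inj => a; rewrite -!(ffunE (val _)) e.
exact: finite_finset.
Qed.

Lemma Dcar_closed (S : set (Dcar A)) : closed S.
Proof.
apply: (accessible_finite_set_closed.1 _ S (sub_finite_set (subsetT S) Dcar_finite)).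
move=> h h' /eqP hh'.
have [a ha] : exists a, val h a != val h' a.
  by apply: contrapT => /forallNP ha; apply/hh'/Dcar_inj => a; apply/eqP/contraT => /ha.
exists (set_val @^-1` (proj a @^-1` [set val h a])); split.
- have val_cont : continuous (set_val : Dcar A -> {ptws L -> bool}).
    exact: initial_continuous.
  have eval_cont : continuous (fun g : {ptws L -> bool} => g a).
    exact: (@proj_continuous L (fun=> bool) a).
  move: val_cont; rewrite continuousP; apply.
  by move: eval_cont; rewrite continuousP; apply; apply: discrete_open.
- by rewrite in_setE.
- by rewrite in_setE /= /proj => ea; move/eqP: ha; apply; exact: esym ea.
Qed.

Lemma Dcar_continuous (T : topologicalType) (g : Dcar A -> T) : continuous g.
Proof. by apply/continuousP => U _; rewrite -closedC; apply: Dcar_closed. Qed.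
End DualSpace.

Section Terms.
Variables (F : Type) (Fpos : F -> bool).

Lemma teval_local (A : CornishAlg Fpos) (S : set (Dcar A))
    (V : Type) (e e' : V -> ca_car A) (t : term F V) :
  (forall f h, S h -> S (Dop f h)) ->
  (forall h v, S h -> val h (e v) = val h (e' v)) ->
  forall h, S h -> val h (teval e t) = val h (teval e' t).
Proof.
move=> SDop ee'; elim: t => [v|t1 IH1 t2 IH2|t1 IH1 t2 IH2|||f t IH] h Sh /=.
- exact: ee'.
- by have [hj _ _ _] := Dcar_hom h; rewrite !hj IH1 ?IH2.
- by have [_ hm _ _] := Dcar_hom h; rewrite !hm IH1 ?IH2.
- by [].
- by [].
- by rewrite !val_Dop IH //; apply: SDop.
Qed.

(* On the up-sets of Y this is term evaluation in the algebra dual to Y. *)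
Fixpoint pred_eval (Y : CornishSpace Fpos) (V : Type) (U : V -> cs_car Y -> bool)
    (t : term F V) (y : cs_car Y) : bool :=
  match t with
  | tvar v => U v y
  | tjoin t1 t2 => pred_eval U t1 y || pred_eval U t2 y
  | tmeet t1 t2 => pred_eval U t1 y && pred_eval U t2 y
  | tbot => false
  | ttop => true
  | tapp f t1 =>
      if Fpos f then pred_eval U t1 (cs_op Y f y) else ~~ pred_eval U t1 (cs_op Y f y)
  end.

Lemma pred_eval_upward (Y : CornishSpace Fpos) (V : Type) (U : V -> cs_car Y -> bool)
    (t : term F V) :
  (forall v, upward (cs_le Y) (U v)) -> upward (cs_le Y) (pred_eval U t).
Proof.
move=> Uup; elim: t => [v|t1 IH1 t2 IH2|t1 IH1 t2 IH2|||f t IH] y y' yy' /=.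
- exact: Uup.
- by case/orP => [/(IH1 _ _ yy') ->|/(IH2 _ _ yy') ->]; rewrite ?orbT.
- by case/andP => /(IH1 _ _ yy') -> /(IH2 _ _ yy') ->.
- by [].
- by [].
- by have := cs_op_mono f yy'; case: (Fpos f) => [/IH|/IH/contra].
Qed.

Lemma pred_eval_morphism (A : CornishAlg Fpos) (Y : CornishSpace Fpos)
    (phi : Dcar A -> cs_car Y) (V : Type) (U : V -> cs_car Y -> bool)
    (e : V -> ca_car A) (t : term F V) :
  is_morphism phi -> (forall h v, val h (e v) = U v (phi h)) ->
  forall h, pred_eval U t (phi h) = val h (teval e t).
Proof.
case=> _ _ phiDop eU; elim: t => [v|t1 IH1 t2 IH2|t1 IH1 t2 IH2|||f t IH] h /=.
- by rewrite eU.
- by have [hj _ _ _] := Dcar_hom h; rewrite hj IH1 IH2.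
- by have [_ hm _ _] := Dcar_hom h; rewrite hm IH1 IH2.
- by have [_ _ hb _] := Dcar_hom h; rewrite hb.
- by have [_ _ _ ht] := Dcar_hom h; rewrite ht.
- by rewrite val_Dop -phiDop IH.
Qed.
End Terms.

Section Discriminator.
Variables (F : Type) (Fpos : F -> bool) (A : CornishAlg Fpos) (t : term F 'I_3).
Hypothesis dA : is_discriminator_term A t.
Variables (Y : CornishSpace Fpos) (phi : Dcar A -> cs_car Y).
Hypothesis mphi : is_morphism phi.
Variables (Ua Ub Uc : cs_car Y -> bool).
Hypotheses (Ua_up : upward (cs_le Y) Ua) (Ub_up : upward (cs_le Y) Ub)
  (Uc_up : upward (cs_le Y) Uc).

Lemma upward_morphism (U : cs_car Y -> bool) :
  upward (cs_le Y) U -> upward (@Dle _ _ A) (fun h => U (phi h)).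
Proof. by case: mphi => _ phi_le _ Uup h h' /phi_le; apply: Uup. Qed.

(* The up-sets Ua \o phi, Ub \o phi, Uc \o phi of D(A) are the supports of
   elements a, b, c of A, and t (a, b, c) is computed by the discriminator. *)
Lemma pred_eval_discriminator h :
  pred_eval (env3 Ua Ub Uc) t (phi h) =
  if upset_rep (fun h => Ua (phi h)) == upset_rep (fun h => Ub (phi h))
  then Uc (phi h) else Ua (phi h).
Proof.
have repE U := upset_repE (upward_morphism U).
set a := upset_rep _; set b := upset_rep _; set c := upset_rep (fun h => Uc (phi h)).
rewrite (pred_eval_morphism (e := env3 a b c) _ mphi) => [|h' [[|[|[|]]] ?]] //=.
- by rewrite dA; case: eqP => _; rewrite repE.
- exact: repE.
- exact: repE.
- exact: repE.
Qed.

Lemma pred_eval_discriminator_agree :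
  (forall h, Ua (phi h) = Ub (phi h)) ->
  forall h, pred_eval (env3 Ua Ub Uc) t (phi h) = Uc (phi h).
Proof.
move=> UaUb h; rewrite pred_eval_discriminator.
by rewrite (_ : (fun h => Ua (phi h)) = (fun h => Ub (phi h))) ?eqxx //; apply: funext.
Qed.

Lemma pred_eval_discriminator_differ h0 :
  Ua (phi h0) != Ub (phi h0) ->
  forall h, pred_eval (env3 Ua Ub Uc) t (phi h) = Ua (phi h).
Proof.
move=> UaUb h; rewrite pred_eval_discriminator; case: eqP => // e.
by move: UaUb; rewrite -!(upset_repE (upward_morphism _)) // e eqxx.
Qed.
End Discriminator.

Section DisjointRanges.
Variables (F : Type) (Fpos : F -> bool) (A A' : CornishAlg Fpos) (t : term F 'I_3).
Hypotheses (dA : is_discriminator_term A t) (dA' : is_discriminator_term A' t).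
Variables (Y : CornishSpace Fpos) (phi1 : Dcar A -> cs_car Y) (phi2 : Dcar A' -> cs_car Y).
Hypotheses (m1 : is_morphism phi1) (m2 : is_morphism phi2).

Let Ua y := up_through (cs_le Y) (range phi1) y.
Let Ub y := up_from (cs_le Y) y.
Let Ua_up y : upward (cs_le Y) (Ua y) :=
  up_through_upward (@cs_le_trans _ _ Y) (R := range phi1) (y := y).
Let Ub_up y : upward (cs_le Y) (Ub y) := up_from_upward (@cs_le_trans _ _ Y) (y := y).

(* For y outside the range of phi1, the two up-sets Ua y and Ub y agree on that
   range but not at y, so t evaluated at them tells the two ranges apart. *)
Lemma pred_eval_outside_range q (Uc : cs_car Y -> bool) :
  ~ range phi1 (phi2 q) -> upward (cs_le Y) Uc ->
  (forall p, pred_eval (env3 (Ua (phi2 q)) (Ub (phi2 q)) Uc) t (phi1 p) = Uc (phi1 p)) /\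
  (forall q', pred_eval (env3 (Ua (phi2 q)) (Ub (phi2 q)) Uc) t (phi2 q') = Ua (phi2 q) (phi2 q')).
Proof.
move=> nq Uc_up; split.
  apply: (pred_eval_discriminator_agree dA m1 (@Ua_up (phi2 q)) (@Ub_up (phi2 q)) Uc_up) => p.
  by apply: up_through_in; [exact: cs_le_refl | exact: cs_le_trans | exists p].
apply: (pred_eval_discriminator_differ dA' m2 (@Ua_up (phi2 q)) (@Ub_up (phi2 q)) Uc_up (h0 := q)).
rewrite /Ua /Ub up_through_out ?up_from_refl //; [exact: cs_le_refl | exact: cs_le_anti].
Qed.

Lemma ranges_disjoint q : ~ range phi1 (phi2 q) -> forall p q', phi1 p <> phi2 q'.
Proof.
move=> nq p q' e.
have [Ht1 Ht2] := pred_eval_outside_range nq (@upward_cst _ _ (~~ Ua (phi2 q) (phi1 p))).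
by move: (Ht1 p) (Ht2 q'); rewrite e => ->; case: (Ua _ _).
Qed.

Lemma not_le_outside_range q : ~ range phi1 (phi2 q) -> forall p, ~ cs_le Y (phi1 p) (phi2 q).
Proof.
move=> nq p pq.
have [Ht1 Ht2] := pred_eval_outside_range nq (@upward_cst _ _ true).
have U_up : forall v, upward (cs_le Y) (env3 (Ua (phi2 q)) (Ub (phi2 q)) (fun=> true) v).
  by case=> [[|[|[|]]] ?] //=; [exact: Ua_up | exact: Ub_up].
have := pred_eval_upward (t := t) U_up pq; rewrite Ht1 Ht2 => /(_ isT).
by rewrite /Ua up_through_out //; exact: cs_le_anti.
Qed.
End DisjointRanges.

Lemma split_of_discriminator (F : Type) (Fpos : F -> bool) (A A' : CornishAlg Fpos)
    (t : term F 'I_3) (Y : CornishSpace Fpos)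
    (phi1 : Dcar A -> cs_car Y) (phi2 : Dcar A' -> cs_car Y) :
  is_discriminator_term A t -> is_discriminator_term A' t ->
  is_morphism phi1 -> is_morphism phi2 -> jointly_surjective phi1 phi2 ->
  ordered_disjoint_union (range phi1) (range phi2) \/
  (surjective_map phi1 /\ surjective_map phi2).
Proof.
move=> dA dA' m1 m2 js.
have [|not_onto] := pselect (surjective_map phi1 /\ surjective_map phi2); [by right | left].
have disj p q : phi1 p <> phi2 q.
  move=> e; apply: not_onto; split=> y; apply: contrapT => ny.
  - have [//|[q' q'y]] := js y; subst y.
    apply: (ranges_disjoint dA dA' m1 m2 (q := q') _ e) => -[p' _ p'q'].
    by apply: ny; exists p'.
  - have [[p' p'y]|//] := js y; subst y.
    apply: (ranges_disjoint dA' dA m2 m1 (q := p') _ (esym e)) => -[q' _ q'p'].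
    by apply: ny; exists q'.
split.
- by apply/seteqP; split=> y // [[p _ <-] [q _ /esym/disj]].
- by apply/seteqP; split=> y // _; case: (js y) => -[x <-]; [left|right]; exists x.
- move=> _ _ [p _ <-] [q _ <-] [pq|qp].
  + by apply: (not_le_outside_range dA dA' m1 m2 _ pq) => -[p' _ /disj].
  + by apply: (not_le_outside_range dA' dA m2 m1 _ qp) => -[q' _ /esym/disj].
Qed.

Definition D_simple (F : Type) (Fpos : F -> bool) (A : CornishAlg Fpos) :=
  forall S : set (Dcar A), D_substructure S -> S <> set0 -> S = setT.

Lemma D_simple_of_discriminator (F : Type) (Fpos : F -> bool) (A : CornishAlg Fpos)
    (t : term F 'I_3) :
  is_discriminator_term A t -> D_simple A.
Proof.
move=> dA S [_ SDop] /eqP/set0P[s Ss]; apply/seteqP; split=> // x _.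
apply: contrapT => nSx.
pose Va := up_through (@Dle _ _ A) S x; pose Vb := up_from (@Dle _ _ A) x.
have Va_up : upward (@Dle _ _ A) Va by apply: up_through_upward; apply: Dle_trans.
have Vb_up : upward (@Dle _ _ A) Vb by apply: up_from_upward; apply: Dle_trans.
pose a := upset_rep Va; pose b := upset_rep Vb.
have ab_on_S h : S h -> val h a = val h b.
  move=> Sh; rewrite !upset_repE //.
  by apply: up_through_in => //; [apply: Dle_refl | apply: Dle_trans].
have nab : a != b.
  apply/eqP => ab; have := upset_repE Va_up x; rewrite -/a ab upset_repE //.
  by rewrite /Va /Vb up_through_out ?up_from_refl //; [exact: Dle_refl | exact: Dle_anti].
(* on S the environments (a, b, c) and (a, a, c) are indistinguishable, but t
   tells them apart at s once c is chosen with val s c != val s a *)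
pose c : ca_car A := if val s a then Order.bottom else Order.top.
have env_on_S h v : S h -> val h (env3 a b c v) = val h (env3 a a c v).
  by case: v => [[|[|[|]]] ?] Sh //=; rewrite ab_on_S.
have := teval_local t SDop env_on_S Ss.
rewrite !dA eqxx (negbTE nab) /c; have [_ _ hb ht] := Dcar_hom s.
by case: (val s a); rewrite ?hb ?ht.
Qed.

Section ProfileSpace.
Variables (F : Type) (Fpos : F -> bool) (V Z : Type) (prof : Z -> term F V -> bool).

Definition prof_op (f : F) (pi : term F V -> bool) (t : term F V) : bool :=
  if Fpos f then pi (tapp f t) else ~~ pi (tapp f t).

Hypotheses (Z_finite : finite_set [set: Z])
  (prof_op_closed : forall f z, exists z', prof z' = prof_op f (prof z)).

(* The finitely many profiles, ordered pointwise: when prof records the values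
   of terms at the points of dual spaces, this is the image of those dual
   spaces in the dual of the free algebra. *)
Definition Prof := discrete_topology (set_type (range prof)).

Definition prof_le (x y : Prof) : Prop := forall t, val x t -> val y t.

Definition prof_pt (z : Z) : Prof := SigSub (mem_set (ex_intro2 _ _ z I erefl)).

Lemma prof_op_in f (x : Prof) : range prof (prof_op f (val x)).
Proof.
have [z _ <-] := set_valP x; have [z' <-] := prof_op_closed f z.
by exists z'.
Qed.

Definition prof_fun (f : F) (x : Prof) : Prof := SigSub (mem_set (prof_op_in f x)).

Lemma prof_le_refl x : prof_le x x.
Proof. by []. Qed.

Lemma prof_le_anti x y : prof_le x y -> prof_le y x -> x = y.
Proof. by move=> xy yx; apply/val_inj/funext => t; apply/idP/idP => [/xy|/yx]. Qed.

Lemma prof_le_trans x y z : prof_le x y -> prof_le y z -> prof_le x z.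
Proof. by move=> xy yz t /xy /yz. Qed.

Lemma Prof_compact : compact [set: Prof].
Proof.
apply: finite_compact; apply: (sub_finite_set _ (finite_image prof_pt Z_finite)).
by move=> x _; have [z _ e] := set_valP x; exists z => //; apply/val_inj.
Qed.

Lemma Prof_priestley x y : ~ prof_le x y ->
  exists U : set Prof, [/\ clopen U, up_set prof_le U, U x & ~ U y].
Proof.
move=> /existsNP[t /not_implyP[xt nyt]].
exists [set u : Prof | val u t]; split => //; last by move=> u v ut /(_ t ut).
by split; [apply: discrete_open | apply: discrete_closed].
Qed.

Lemma prof_fun_continuous f : continuous (prof_fun f).
Proof. by apply/continuousP => U _; apply: discrete_open. Qed.

Lemma prof_fun_mono f x y : prof_le x y ->
  if Fpos f then prof_le (prof_fun f x) (prof_fun f y)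
  else prof_le (prof_fun f y) (prof_fun f x).
Proof.
by move=> xy; rewrite /prof_le /= /prof_op; case: (Fpos f) => t; [apply: xy | apply/contra/xy].
Qed.

Definition ProfileSpace : CornishSpace Fpos :=
  Build_CornishSpace prof_le_refl prof_le_anti prof_le_trans Prof_compact
    Prof_priestley prof_fun_continuous prof_fun_mono.
End ProfileSpace.

Section TermInterpolation.
Variables (F V : Type) (Z : eqType) (ev : term F V -> Z -> bool).
Hypotheses (ev_join : forall t1 t2 z, ev (tjoin t1 t2) z = ev t1 z || ev t2 z)
  (ev_meet : forall t1 t2 z, ev (tmeet t1 t2) z = ev t1 z && ev t2 z)
  (ev_bot : forall z, ev (@tbot F V) z = false) (ev_top : forall z, ev (@ttop F V) z = true).
Variables (T : Z -> bool) (s : seq Z).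
Hypothesis T_sep : forall p q, T p -> ~~ T q -> exists t, ev t p && ~~ ev t q.

Lemma term_above p : T p -> exists t, ev t p /\ {in s, forall q, ev t q -> T q}.
Proof.
move=> Tp; elim: s => [|q s' [t [tp ts']]]; first by exists (@ttop F V); rewrite ev_top.
have [Tq|nTq] := boolP (T q).
  by exists t; split=> // q'; rewrite inE => /orP[/eqP -> //|/ts'].
have [u /andP[up nuq]] := T_sep Tp nTq.
exists (tmeet t u); rewrite ev_meet tp up; split=> // q'.
rewrite inE ev_meet => /orP[/eqP -> /andP[_ uq]|/ts' tT /andP[/tT //]].
by rewrite uq in nuq.
Qed.

Lemma term_interpolation : exists t, {in s, forall z, ev t z = T z}.
Proof.
suff [t [tT Tt]] : exists t, {in s, forall z, ev t z -> T z} /\ {in s, forall z, T z -> ev t z}.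
  by exists t => z zs; apply/idP/idP; [apply: tT | apply: Tt].
elim: {2}s => [|p s' [t [tT Tt]]]; first by exists (@tbot F V); split=> // z _; rewrite ev_bot.
have [Tp|nTp] := boolP (T p); last first.
  by exists t; split=> // z; rewrite inE => /orP[/eqP ->|/Tt //]; rewrite (negbTE nTp).
have [u [up uT]] := term_above Tp.
exists (tjoin t u); split=> z zs; rewrite ev_join.
  by case/orP=> [/(tT _ zs)|/(uT _ zs)].
by case/orP: zs => [/eqP -> _|/Tt tz /tz ->]; rewrite ?up ?orbT.
Qed.
End TermInterpolation.

Lemma prof_op_Dop (F : Type) (Fpos : F -> bool) (A : CornishAlg Fpos) (V : Type)
    (e : V -> ca_car A) f (h : Dcar A) :
  (fun t => val (Dop f h) (teval e t)) = prof_op Fpos f (fun t => val h (teval e t)).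
Proof. by apply: funext => t; rewrite /prof_op /= /Dop_fun; case: (Fpos f). Qed.

Section TwoDuals.
Variables (F : Type) (Fpos : F -> bool) (A A' : CornishAlg Fpos).
Variables (V : Type) (e : V -> ca_car A) (e' : V -> ca_car A').

Definition pair_prof (z : Dcar A + Dcar A') : term F V -> bool :=
  match z with
  | inl h => fun t => val h (teval e t)
  | inr h => fun t => val h (teval e' t)
  end.

Lemma pair_prof_finite : finite_set [set: Dcar A + Dcar A'].
Proof.
have -> : [set: Dcar A + Dcar A'] = inl @` setT `|` inr @` setT.
  by apply/seteqP; split=> // -[h|h] _; [left|right]; exists h.
by rewrite finite_setU; split; apply: finite_image; apply: Dcar_finite.
Qed.

Lemma pair_prof_op_closed f z : exists z', pair_prof z' = prof_op Fpos f (pair_prof z).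
Proof. by case: z => h; [exists (inl (Dop f h)) | exists (inr (Dop f h))]; apply: prof_op_Dop. Qed.

Definition Ypair : CornishSpace Fpos := ProfileSpace pair_prof_finite pair_prof_op_closed.

Definition pi1 (h : Dcar A) : cs_car Ypair := prof_pt pair_prof (inl h).
Definition pi2 (h : Dcar A') : cs_car Ypair := prof_pt pair_prof (inr h).

Lemma pi1_morphism : is_morphism pi1.
Proof.
split=> [|h h' hh' t|f h]; first exact: Dcar_continuous.
  exact/implyP/hh'.
by apply/val_inj; apply: prof_op_Dop.
Qed.

Lemma pi2_morphism : is_morphism pi2.
Proof.
split=> [|h h' hh' t|f h]; first exact: Dcar_continuous.
  exact/implyP/hh'.
by apply/val_inj; apply: prof_op_Dop.
Qed.

Lemma pi_jointly_surjective : jointly_surjective pi1 pi2.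
Proof.
move=> y; have [[h|h] _ hy] := set_valP y; [left|right]; exists h; exact/val_inj.
Qed.

Lemma pi2_in_range_eq : (forall q, exists p, pi1 p = pi2 q) ->
  forall u v, e u = e v -> e' u = e' v.
Proof.
move=> onto u v euv; apply: eq_from_Dhom => q; have [p /(congr1 val) pq] := onto q.
have at_var w : val p (e w) = val q (e' w) by have := congr1 (fun pi => pi (tvar F w)) pq.
by rewrite -!at_var euv.
Qed.

(* Incomparability provides a separating term for any two points of D(A) and
   D(A') on which the target values differ; within one dual the variables do. *)
Lemma incomparable_pi_term :
  (forall p q, ~ comparable_in (cs_le Ypair) (pi1 p) (pi2 q)) ->
  forall w w', exists t, teval e t = e w /\ teval e' t = e' w'.
Proof.
move=> incomp w w'.
pose T (z : Dcar A + Dcar A') : bool :=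
  match z with inl h => val h (e w) | inr h => val h (e' w') end.
have sep_of_not_le z1 z2 :
    ~ cs_le Ypair (prof_pt pair_prof z1) (prof_pt pair_prof z2) ->
    exists t, pair_prof z1 t && ~~ pair_prof z2 t.
  by move=> /existsNP[t /not_implyP[z1t /negP z2t]]; exists t; apply/andP.
have T_sep z1 z2 : T z1 -> ~~ T z2 -> exists t, pair_prof z1 t && ~~ pair_prof z2 t.
  case: z1 z2 => [p|p] [q|q] Tp Tq.
  - by exists (tvar F w); apply/andP.
  - by apply: sep_of_not_le => pq; apply: (incomp p q); left.
  - by apply: sep_of_not_le => pq; apply: (incomp q p); right.
  - by exists (tvar F w'); apply/andP.
have [s es] := (finite_seqP _).1 pair_prof_finite.
have [t tT] : exists t, {in s, forall z, pair_prof z t = T z}.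
  apply: (term_interpolation (ev := fun t z => pair_prof z t)) => [t1 t2|t1 t2|||];
    try by case=> h /=; have [hj hm hb ht] := Dcar_hom h; rewrite ?hj ?hm ?hb ?ht.
  exact: T_sep.
have in_s z : z \in s by have : [set` s] z by rewrite -es.
exists t; split; apply: eq_from_Dhom => h.
- exact: tT (inl h) (in_s _).
- exact: tT (inr h) (in_s _).
Qed.
End TwoDuals.

Lemma range_preimage_substructure (F : Type) (Fpos : F -> bool) (A A' : CornishAlg Fpos)
    (Y : CornishSpace Fpos) (phi1 : Dcar A -> cs_car Y) (phi2 : Dcar A' -> cs_car Y) :
  is_morphism phi1 -> is_morphism phi2 -> D_substructure (phi2 @^-1` range phi1).
Proof.
move=> [_ _ phi1_op] [_ _ phi2_op]; split=> [|f q [p _ pq]]; first exact: Dcar_closed.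
by exists (Dop f p); rewrite // phi1_op phi2_op pq.
Qed.

Section PairTerms.
Variables (F : Type) (Fpos : F -> bool) (A A' : CornishAlg Fpos).

Definition morphisms_split :=
  forall (Y : CornishSpace Fpos) (phi1 : Dcar A -> cs_car Y) (phi2 : Dcar A' -> cs_car Y),
    is_morphism phi1 -> is_morphism phi2 -> jointly_surjective phi1 phi2 ->
    ordered_disjoint_union (range phi1) (range phi2) \/
    (surjective_map phi1 /\ surjective_map phi2).

Definition comparable_images_meet :=
  forall (Y : CornishSpace Fpos) (phi1 : Dcar A -> cs_car Y) (phi2 : Dcar A' -> cs_car Y),
    is_morphism phi1 -> is_morphism phi2 -> jointly_surjective phi1 phi2 ->
    (exists a b, comparable_in (cs_le Y) (phi1 a) (phi2 b)) ->
    exists c d, phi1 c = phi2 d.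

Definition pair_terms :=
  forall (x z : ca_car A) (x' y' z' : ca_car A'), x' != y' ->
    exists t : term F 'I_3, teval (env3 x x z) t = z /\ teval (env3 x' y' z') t = x'.

Lemma comparable_images_meet_of_split : morphisms_split -> comparable_images_meet.
Proof.
move=> splits Y phi1 phi2 m1 m2 js [p [q pq]].
have [[_ _ incomp]|[_ onto2]] := splits Y phi1 phi2 m1 m2 js.
  by case: (incomp (phi1 p) (phi2 q)); [exists p | exists q |].
by have [q' q'p] := onto2 (phi1 p); exists p, q'.
Qed.

Section Witnesses.
Variables (x z : ca_car A) (x' y' z' : ca_car A').
Hypothesis x'y' : x' != y'.
Local Notation e := (env3 x x z).
Local Notation e' := (env3 x' y' z').

Lemma pi2_not_in_range1 : ~ (forall q, exists p, pi1 e e' p = pi2 e e' q).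
Proof.
move=> /pi2_in_range_eq/(_ ord0 (@Ordinal 3 1 isT) erefl) x'_eq_y'.
by move: x'y'; rewrite [x']x'_eq_y' eqxx.
Qed.

Lemma pair_term_of_incomparable :
  (forall p q, ~ comparable_in (cs_le (Ypair e e')) (pi1 e e' p) (pi2 e e' q)) ->
  exists t : term F 'I_3, teval e t = z /\ teval e' t = x'.
Proof. by move=> incomp; apply: (incomparable_pi_term incomp ord_max ord0). Qed.
End Witnesses.

Lemma pair_terms_of_split : morphisms_split -> pair_terms.
Proof.
move=> splits x z x' y' z' x'y'; apply: pair_term_of_incomparable => p q pq.
set e := env3 x x z; set e' := env3 x' y' z'.
have [[_ _ incomp]|[onto1 _]] := splits _ _ _ (pi1_morphism e e') (pi2_morphism e e')
  (pi_jointly_surjective (e := e) (e' := e')).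
  by apply: (incomp _ _ _ _ pq); [exists p | exists q].
by apply: (pi2_not_in_range1 (x := x) (z := z) (z' := z') x'y') => q'; apply: onto1.
Qed.

Lemma pair_terms_of_simple_meet : D_simple A' -> comparable_images_meet -> pair_terms.
Proof.
move=> Dsimp meets x z x' y' z' x'y'; apply: pair_term_of_incomparable => p q pq.
set e := env3 x x z; set e' := env3 x' y' z'.
have [c [d cd]] := meets _ _ _ (pi1_morphism e e') (pi2_morphism e e')
  (pi_jointly_surjective (e := e) (e' := e')) (ex_intro _ p (ex_intro _ q pq)).
have full : pi2 e e' @^-1` range (pi1 e e') = setT.
  apply: Dsimp; first exact: range_preimage_substructure (pi1_morphism e e') (pi2_morphism e e').
  by apply/eqP/set0P; exists d, c.
apply: (pi2_not_in_range1 (x := x) (z := z) (z' := z') x'y') => q'.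
have : (pi2 e e' @^-1` range (pi1 e e')) q' by rewrite full.
by case=> p' _; exists p'.
Qed.
End PairTerms.

Definition tmedian (F V : Type) (t1 t2 t3 : term F V) : term F V :=
  tjoin (tjoin (tmeet t1 t2) (tmeet t2 t3)) (tmeet t1 t3).

Lemma median_eq (d : Order.disp_t) (L : latticeType d) (a b c v : L) :
  (a = v /\ b = v) \/ (b = v /\ c = v) \/ (a = v /\ c = v) ->
  Order.join (Order.join (Order.meet a b) (Order.meet b c)) (Order.meet a c) = v.
Proof.
case=> [[-> ->]|[[-> ->]|[-> ->]]]; rewrite ?meetxx.
- by rewrite meetKU meetKU.
- by rewrite [Order.join (Order.meet a v) v]joinC !meetKUC.
- by rewrite [Order.meet b v]meetC joinxx joinC meetKU.
Qed.

Lemma majority_extend (T : Type) (C : eqType) (good : T -> C -> Prop)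
    (m : T -> T -> T -> T) (t0 : T) :
  (forall t1 t2 t3 c,
     (good t1 c /\ good t2 c) \/ (good t2 c /\ good t3 c) \/ (good t1 c /\ good t3 c) ->
     good (m t1 t2 t3) c) ->
  forall s : seq C, {in s &, forall c d, exists t, good t c /\ good t d} ->
  exists t, {in s, forall c, good t c}.
Proof.
move=> m_good s; have [n] := ubnP (size s); elim: n s => // n IH.
case=> [|a [|b [|c r]]] /= sz pairs.
- by exists t0.
- have [t [ta _]] := pairs a a (mem_head _ _) (mem_head _ _).
  by exists t => x; rewrite inE => /eqP ->.
- have [t [ta tb]] := pairs a b (mem_head _ _) (mem_last a [:: b]).
  by exists t => x; rewrite !inE => /orP[] /eqP ->.
(* the median of good terms for the lists without a, b and c is good everywhere *)
have IH' s' : {subset s' <= [:: a, b, c & r]} -> size s' = (size r).+2 ->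
    exists t, {in s', forall x, good t x}.
  move=> s's sz'; apply: IH; first by rewrite sz'.
  exact: sub_in2 pairs.
have [t1 t1_good] := IH' [:: b, c & r] (fun x => @mem_behead _ [:: a, b, c & r] x) erefl.
have [t2 t2_good] : exists t, {in [:: a, c & r], forall x, good t x}.
  by apply: IH' => // x; rewrite !inE => /or3P[]->; rewrite ?orbT.
have [t3 t3_good] : exists t, {in [:: a, b & r], forall x, good t x}.
  by apply: IH' => // x; rewrite !inE => /or3P[]->; rewrite ?orbT.
exists (m t1 t2 t3) => x; rewrite !inE => /or4P[] xs; apply: m_good.
- by right; left; split; [apply: t2_good | apply: t3_good]; rewrite !inE xs.
- by right; right; split; [apply: t1_good | apply: t3_good]; rewrite !inE xs ?orbT.
- by left; split; [apply: t1_good | apply: t2_good]; rewrite !inE xs ?orbT.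
- by left; split; [apply: t1_good | apply: t2_good]; rewrite !inE xs ?orbT.
Qed.

Lemma discriminator_of_pair_terms (F : Type) (Fpos : F -> bool) (I : finType)
    (B : I -> CornishAlg Fpos) :
  (forall i j, pair_terms (B i) (B j)) ->
  exists t : term F 'I_3, forall i, is_discriminator_term (B i) t.
Proof.
move=> pairs; pose C := {i : I & (ca_car (B i) * ca_car (B i) * ca_car (B i))%type}.
pose good t (c : C) :=
  let: existT _ (x, y, z) := c in teval (env3 x y z) t = if x == y then z else x.
have [t t_good] : exists t, {in index_enum C, forall c, good t c}.
  apply: (majority_extend (good := good) (m := @tmedian F 'I_3) (tvar F ord0)).
    by move=> t1 t2 t3 [i [[x y] z]]; apply: median_eq.
  move=> [i [[x y] z]] [j [[x' y'] z']] _ _ /=.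
  have [<-|xy] := eqVneq x y; have [<-|x'y'] := eqVneq x' y'.
  - by exists (tvar F ord_max).
  - by have [t [t1 t2]] := pairs i j x z x' y' z' x'y'; exists t.
  - by have [t [t1 t2]] := pairs j i x' z' x y z xy; exists t.
  - by exists (tvar F ord0).
by exists t => i x y z; apply: (t_good (Tagged _ (x, y, z))); apply: mem_index_enum.
Qed.

Unset Implicit Arguments.

Theorem theorem5p8 (F : Type) (Fpos : F -> bool) (I : finType)
    (B : I -> CornishAlg Fpos) :
  [<->
   (* (1) *)
   (forall i, quasi_primal (B i)) /\
     (exists t : term F 'I_3, forall i, is_discriminator_term (B i) t);
   (* (2) *)
   (forall (i j : I) (Y : CornishSpace Fpos)
           (phi1 : Dcar (B i) -> cs_car Y) (phi2 : Dcar (B j) -> cs_car Y),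
      is_morphism phi1 -> is_morphism phi2 -> jointly_surjective phi1 phi2 ->
      ordered_disjoint_union (range phi1) (range phi2) \/
      (surjective_map phi1 /\ surjective_map phi2));
   (* (3) *)
   (forall i (S : set (Dcar (B i))), D_substructure S -> S <> set0 -> S = setT) /\
   (forall (i j : I) (Y : CornishSpace Fpos)
           (phi1 : Dcar (B i) -> cs_car Y) (phi2 : Dcar (B j) -> cs_car Y),
      is_morphism phi1 -> is_morphism phi2 -> jointly_surjective phi1 phi2 ->
      (exists a b, comparable_in (cs_le Y) (phi1 a) (phi2 b)) ->
      exists c d, phi1 c = phi2 d)
  ].
Proof.
tfae=> [[_ [t disc]] i j Y phi1 phi2|splits|[Dsimp meets]].
- exact: split_of_discriminator (disc i) (disc j).
- have [t disc] := discriminator_of_pair_terms (fun i j => pair_terms_of_split (splits i j)).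
  split=> [i|i j]; first exact: D_simple_of_discriminator (disc i).
  exact: comparable_images_meet_of_split (splits i j).
- have [t disc] := discriminator_of_pair_terms
    (fun i j => pair_terms_of_simple_meet (Dsimp j) (meets i j)).
  by split=> [i|]; exists t.
Qed.
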